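(* Let $S^1=[0,1)$ with addition mod 1 and $T(x)=2x\pmod 1$. Let $J_1,J_2:S^1\to\mathbb{R}$ be positive with $\sum_{x:\,T(x)=y}J_i(x)=1$ for all $y$, where $J_1$ is Hölder continuous, i.e. $|J_1(r)-J_1(s)|\le K|r-s|^\alpha$ for some $K>0$, $0<\alpha\le1$, and $J_2$ is continuous. Let $\mu_1$ satisfy $\mathcal{L}_{\log J_1}^*\mu_1=\mu_1$, and let $\mu_2$ be the weak limit as $n\to\infty$ of the probabilities $$\rho_n=\sum_{j=1}^{2^n}\delta_{j/2^n}\prod_{k=0}^{n-1}J_2\big(T^k(j/2^n)\big).$$ Then the Jacobian $\tilde J$ of $\mu_1*\mu_2$ is Hölder continuous with the same exponent $\alpha$ and the same Hölder constant $K$.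
   Context: The Ruelle operator is $\mathcal{L}_{\log J}(\varphi)(y)=\sum_{x:\,T(x)=y}J(x)\varphi(x)$ and $\mathcal{L}_{\log J}^*$ its dual on probabilities; the Jacobian of a probability $\rho$ is the function $\tilde J$ with $\mathcal{L}_{\log \tilde J}^*\rho=\rho$ (here given by $\tilde J(u)=\int J_1(u-x)\,d\mu_2(x)$). Convolution: $\int\phi\,d(\eta*\mu)=\int\!\!\int\phi(x+y)\,d\mu(y)\,d\eta(x)$ (sums mod 1). *)

(* R : realType. The circle S^1 = [0,1) is modelled
   inside R; points are reduced mod 1 with [frac]. *)
From HB Require Import structures.
From mathcomp Require Import all_boot all_order all_algebra.
From mathcomp Require Import all_classical all_reals all_analysis.
Set Implicit Arguments. Unset Strict Implicit. Unset Printing Implicit Defensive.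
Import Order.TTheory GRing.Theory Num.Theory numFieldNormedType.Exports.
Local Open Scope classical_set_scope.
Local Open Scope ring_scope.

Section defs.
Variable R : realType.

Definition frac (x : R) : R := x - (Num.floor x)%:~R.

Definition T2 (x : R) : R := frac (2 * x).

Definition cdist (r s : R) : R := Num.min (frac (r - s)) (1 - frac (r - s)).

Definition positive_on_circle (J : R -> R) : Prop :=
  forall x, 0 <= x < 1 -> 0 < J x.

(* sum_{T x = y} J x = 1 for all y in [0,1) *)
Definition normalized (J : R -> R) : Prop :=
  forall y, 0 <= y < 1 -> J (y / 2) + J ((y + 1) / 2) = 1.

(* continuous functions on S^1, seen as functions on R through frac *)
Definition circle_continuous (f : R -> R) : Prop :=
  continuous (fun x : R => f (frac x)).

(* Ruelle operator L_{log J}(phi)(y) = sum_{T x = y} J x phi x  (y taken mod 1) *)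
Definition ruelle (J phi : R -> R) (y : R) : R :=
  J (frac y / 2) * phi (frac y / 2) + J ((frac y + 1) / 2) * phi ((frac y + 1) / 2).

(* a probability on R concentrated on [0,1) = S^1 *)
Definition circle_prob (mu : probability R R) : Prop :=
  mu `[(0:R), 1[%classic = 1%E.

(* L_{log J}^* mu = mu, tested against continuous functions on S^1 *)
Definition dual_fixed (J : R -> R) (mu : probability R R) : Prop :=
  forall phi : R -> R, circle_continuous phi ->
    (\int[mu]_x (ruelle J (fun z => phi (frac z)) x)%:E
     = \int[mu]_x (phi (frac x))%:E)%E.

Definition rho_weight (J : R -> R) (n j : nat) : R :=
  \prod_(0 <= k < n) J (frac (iter k T2 (j%:R / 2 ^+ n))).

(* integral of phi against rho_n = sum_{j=1}^{2^n} delta_{j/2^n} * weight *)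
Definition rho_int (J : R -> R) (n : nat) (phi : R -> R) : R :=
  \sum_(1 <= j < (2 ^ n).+1) rho_weight J n j * phi (frac (j%:R / 2 ^+ n)).

Definition weak_limit_rho (J : R -> R) (mu : probability R R) : Prop :=
  forall phi : R -> R, circle_continuous phi ->
    (fun n => rho_int J n phi) @ \oo --> fine (\int[mu]_x (phi (frac x))%:E).

Definition conv_jacobian (J1 : R -> R) (mu2 : probability R R) (u : R) : R :=
  fine (\int[mu2]_x (J1 (frac (u - x)))%:E).

Definition holder_circle (f : R -> R) (K alpha : R) : Prop :=
  forall r s, 0 <= r < 1 -> 0 <= s < 1 -> `|f r - f s| <= K * (cdist r s) `^ alpha.

End defs.

From Pilot Require Import Defs.
From mathcomp Require Import all_boot all_order all_algebra.
From mathcomp Require Import all_classical all_reals all_analysis.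
From mathcomp Require Import lra measurable_realfun.
Set Implicit Arguments. Unset Strict Implicit. Unset Printing Implicit Defensive.
Import Order.TTheory GRing.Theory Num.Theory numFieldNormedType.Exports.
Local Open Scope classical_set_scope.
Local Open Scope ring_scope.

(* Translations are isometries of the circle, so for every x the function
   u |-> J1 (u - x) is Hoelder with constant K and exponent alpha; being
   Hoelder it is also continuous and bounded, hence integrable, and averaging
   it against the probability mu2 keeps the Hoelder bound. *)

(* A bare [frac] would denote the fraction type of MathComp-Analysis. *)
Local Notation frac := Defs.frac.

Section circle.
Variable R : realType.
Implicit Types (a b x : R).

Lemma frac_itv x : 0 <= frac x < 1.
Proof.
rewrite /frac subr_ge0 floor_le /= ltrBlDl.
by have := floorD1_gt x; rewrite intrD addrC.
Qed.

Lemma frac_id x : 0 <= x < 1 -> frac x = x.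
Proof.
move=> x01; rewrite /frac (_ : Num.floor x = 0) ?subr0 //; apply: floor_def.
by rewrite add0r; lra.
Qed.

Lemma frac_addrz x (k : int) : frac (x + k%:~R) = frac x.
Proof. by rewrite /frac floorDrz ?intr_int // intrKfloor intrD; lra. Qed.

Lemma fracB_frac a b : frac (frac a - frac b) = frac (a - b).
Proof.
have -> : frac a - frac b = a - b + (Num.floor b - Num.floor a)%:~R.
  by rewrite /frac intrB; lra.
exact: frac_addrz.
Qed.

Lemma cdist_frac a b : cdist (frac a) (frac b) = cdist a b.
Proof. by rewrite /cdist fracB_frac. Qed.

Lemma cdistBr a b x : cdist (a - x) (b - x) = cdist a b.
Proof. by rewrite /cdist (_ : a - x - (b - x) = a - b) //; lra. Qed.

Lemma cdist_ge0 a b : 0 <= cdist a b.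
Proof. by rewrite /cdist le_min; have := frac_itv (a - b); lra. Qed.

Lemma cdist_le_half a b : cdist a b <= 2^-1.
Proof.
rewrite /cdist ge_min; have := frac_itv (a - b).
by case: (leP (frac (a - b)) 2^-1) => ? ?; apply/orP; [left | right]; lra.
Qed.

Lemma cdist_le_norm a b : cdist a b <= `|a - b|.
Proof.
have [d_ge_half|d_lt_half] := leP 2^-1 `|a - b|.
  exact: le_trans (cdist_le_half a b) d_ge_half.
rewrite /cdist ge_min; case: (leP 0 (a - b)) => [d_ge0|d_lt0].
  by rewrite ger0_norm // frac_id ?lexx //; move: d_lt_half; rewrite ger0_norm //; lra.
move: d_lt_half; rewrite ltr0_norm // => d_gt.
rewrite -(frac_addrz (a - b) 1) frac_id; last lra.
by apply/orP; right; lra.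
Qed.

End circle.

Section holder.
Variables (R : realType) (J : R -> R) (K alpha : R).
Hypotheses (K_gt0 : 0 < K) (alpha_gt0 : 0 < alpha).
Hypothesis holderJ : holder_circle J K alpha.

Lemma holder_frac y t :
  `|J (frac y) - J (frac t)| <= K * cdist y t `^ alpha.
Proof. by rewrite -cdist_frac; apply: holderJ; exact: frac_itv. Qed.

Lemma continuous_holder_frac : continuous (fun x => J (frac x)).
Proof.
move=> t; apply/cvgrPdist_lt => e e_gt0.
set delta := (e / K) `^ alpha^-1.
have delta_gt0 : 0 < delta by rewrite powR_gt0 // divr_gt0.
have delta_alpha : delta `^ alpha = e / K.
  by rewrite /delta -powRrM mulVf ?gt_eqF // powRr1 // ltW // divr_gt0.
near=> y.
have ty_lt : `|t - y| < delta by near: y; exists delta.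
apply: le_lt_trans (holder_frac t y) _.
rewrite -ltr_pdivlMl // mulrC -delta_alpha.
have pow_le : cdist t y `^ alpha <= `|t - y| `^ alpha.
  by apply: ge0_ler_powR; rewrite ?nnegrE ?(ltW alpha_gt0) ?cdist_ge0 ?cdist_le_norm.
have pow_lt : `|t - y| `^ alpha < delta `^ alpha.
  by apply: gt0_ltr_powR; rewrite ?nnegrE ?(ltW delta_gt0).
exact: le_lt_trans pow_le pow_lt.
Unshelve. all: by end_near.
Qed.

Lemma norm_holder_frac_le x : `|J (frac x)| <= `|J 0| + K.
Proof.
have cdist_pow_le1 : cdist x 0 `^ alpha <= 1.
  have -> : 1 = 1 `^ alpha :> R by rewrite powR1.
  apply: ge0_ler_powR; rewrite ?nnegrE ?(ltW alpha_gt0) ?cdist_ge0 ?ler01 //.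
  by apply: le_trans (cdist_le_half x 0) _; lra.
have := holder_frac x 0; rewrite (@frac_id _ 0) ?lexx ?ltr01 // => hx.
rewrite addrC -[J (frac x)](subrK (J 0)); apply: le_trans (ler_normD _ _) _.
rewrite lerD2r; apply: le_trans hx _.
by rewrite -[leRHS]mulr1 ler_pM2l.
Qed.

End holder.

Section averaging.
Variables (d : measure_display) (T : measurableType d) (R : realType).
Variable mu : probability T R.

Lemma probability_bounded_integrable (f : T -> R) (M : R) :
  measurable_fun setT f -> (forall x, `|f x| <= M) ->
  mu.-integrable setT (EFin \o f).
Proof.
move=> mf f_le; apply: measurable_bounded_integrable => //.
  by apply: (@le_lt_trans _ _ 1%E); rewrite ?ltry ?probability_le1.
rewrite /bounded_near; near=> N => x _ /=; apply: le_trans (f_le x) _.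
by near: N; apply: nbhs_pinfty_ge; exact: num_real.
Unshelve. all: by end_near.
Qed.

Lemma le_normr_RintegralB (f g : T -> R) (c : R) :
  mu.-integrable setT (EFin \o f) -> mu.-integrable setT (EFin \o g) ->
  (forall x, `|f x - g x| <= c) ->
  `|Rintegral mu setT f - Rintegral mu setT g| <= c.
Proof.
move=> intf intg fg_le.
have intfg : mu.-integrable setT (EFin \o (f \- g)).
  by rewrite (_ : EFin \o _ = (EFin \o f) \- (EFin \o g))%E ?integrableB //.
rewrite -RintegralB //; apply: le_trans (le_normr_Rintegral _ _) _ => //.
apply: le_trans (@le_Rintegral _ _ _ mu setT _ (cst c) _ _ _ _) _ => //.
- exact: integrable_norm.
- exact: finite_measure_integrable_cst.
by rewrite Rintegral_cst // (_ : fine (mu setT) = 1) ?mulr1 // probability_setT.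
Qed.

End averaging.

Lemma holder_conv_jacobian (R : realType) (J : R -> R) (K alpha : R)
    (mu : probability R R) :
  0 < K -> 0 < alpha -> holder_circle J K alpha ->
  holder_circle (conv_jacobian J mu) K alpha.
Proof.
move=> K_gt0 alpha_gt0 holderJ r s _ _.
pose f u x := J (frac (u - x)).
have integrable_f u : mu.-integrable setT (EFin \o f u).
  apply: (probability_bounded_integrable _ (M := `|J 0| + K)).
    apply: continuous_measurable_fun => x.
    apply: (continuous_comp (f := fun x => u - x) (g := fun x => J (frac x))).
      exact: (@cvgB _ _ _ _ _ (fun=> u) id) (cvg_cst _) cvg_id.
    exact: (continuous_holder_frac K_gt0 alpha_gt0 holderJ).
  by move=> x; exact: norm_holder_frac_le K_gt0 alpha_gt0 holderJ (u - x).
apply: le_normr_RintegralB; [exact: integrable_f | exact: integrable_f | move=> x].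
by rewrite -(cdistBr r s x); exact: holder_frac.
Qed.

Theorem theorem2 (R : realType) (J1 J2 : R -> R) (K alpha : R)
  (mu1 mu2 : probability R R) :
  positive_on_circle J1 -> positive_on_circle J2 ->
  normalized J1 -> normalized J2 ->
  0 < K -> 0 < alpha <= 1 -> holder_circle J1 K alpha ->
  circle_continuous J2 ->
  circle_prob mu1 -> dual_fixed J1 mu1 ->
  circle_prob mu2 -> weak_limit_rho J2 mu2 ->
  holder_circle (conv_jacobian J1 mu2) K alpha.
Proof.
move=> _ _ _ _ K_gt0 /andP[alpha_gt0 _] holderJ1 _ _ _ _ _.
exact: holder_conv_jacobian.
Qed.
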